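(* Fix $0<\alpha'<\alpha<1$ and $a>0$. There exists $b>0$ such that for every integer $s\ge1$, $$\max_{\alpha' s\le k\le \alpha s}\ \mathbb E_k\Big[\exp\Big\{\frac{a\max_{0\le t\le 2s}x(t)}{\sqrt s}\Big\}\Big]\le b.$$
   Context: A Dyck path of length $2s$ is a sequence $x(0),\dots,x(2s)$ of integers with $x(0)=x(2s)=0$, $x(t)\ge0$ and $x(t)-x(t-1)=\pm1$. Step $t$ (from $t-1$ to $t$) is called odd if $t$ is odd. $\mathcal X_{s,k}$ is the set of Dyck paths of length $2s$ having exactly $k$ up steps at odd instants (its cardinality is the Narayana number $\frac1s\binom sk\binom s{k-1}$), and $\mathbb E_k$, $\mathbb P_k$ denote expectation and probability under the uniform distribution on $\mathcal X_{s,k}$. *)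

From Stdlib Require Import Reals ZArith List Bool.
Import ListNotations.

(* A path of length n is encoded by its list of n steps: true = up (+1), false = down (-1).
   Step number t (1-based) is the t-th element of the list. *)

Fixpoint all_paths (n : nat) : list (list bool) :=
  match n with
  | O => [[]]
  | S m => map (cons true) (all_paths m) ++ map (cons false) (all_paths m)
  end.

Fixpoint heights_from (h : Z) (p : list bool) : list Z :=
  match p with
  | [] => []
  | b :: q => let h' := (if b then h + 1 else h - 1)%Z in h' :: heights_from h' q
  end.

Definition is_dyck (p : list bool) : bool :=
  forallb (fun h => (0 <=? h)%Z) (heights_from 0 p)
  && Z.eqb (last (0%Z :: heights_from 0 p) 0%Z) 0%Z.

Fixpoint ups_at_odd (odd : bool) (p : list bool) : nat :=
  match p with
  | [] => O
  | b :: q => ((if odd && b then 1 else 0) + ups_at_odd (negb odd) q)%nat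
  end.

Definition odd_ups (p : list bool) : nat := ups_at_odd true p.

Definition X (s k : nat) : list (list bool) :=
  filter (fun p => is_dyck p && Nat.eqb (odd_ups p) k) (all_paths (2 * s)).

Definition max_height (p : list bool) : Z :=
  fold_right Z.max 0%Z (heights_from 0 p).

Definition Ek (s k : nat) (f : list bool -> R) : R :=
  (fold_right (fun p acc => (f p + acc)%R) 0%R (X s k) / INR (length (X s k)))%R.

From Stdlib Require Import Reals ZArith List Bool Lia Lra Psatz.
Import ListNotations.

(* A path of X_{s,k} is read as s pairs (odd step, even step).  Its odd steps
   form a bit string a with k ones, and the complements of its even steps,
   shifted by one pair, form a bit string q with k - 1 ones.  The walk with
   increments d_i = a_i - q_i has total 1, its partial sums essentially give the
   heights at odd times (so the height is at most twice the maximum of the walk),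
   and the path is Dyck iff these partial sums stay positive (section Encoding).
   - Cycle lemma: exactly one rotation of any pair with k and k - 1 ones has a
     positive walk, hence s |X_{s,k}| >= C(s,k) C(s,k-1) (CycleLemma, Rotations).
   - Reflection: pairs whose walk reaches level h are at most C(s,q+h) C(s,p-h)
     (Reflection), and these products decay like exp(-h^2/2s) (BinomialDecay).
   - Rotating a walk changes its maximum by at most its range, so s times the
     number of paths of height >= m >= 4H + 2 is at most the number of pairs
     whose walk rises, or falls, by H; hence P_k(max x >= m) <= 2 exp(-(H-1)H/2s)
     uniformly in k (Rotations, TailBound).
   - Summing this Gaussian tail against the increments of m |-> exp(a m/sqrt s)
     (layer-cake formula) bounds E_k[exp(a max x/sqrt s)] by 1 + 2a exp(K(a)) for
     every s >= 1 and every k (Summation, Moment).  The theorem follows. *)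

Lemma length_le_injection {A B} (f : A -> B) (L : list A) (L' : list B) :
  NoDup L -> (forall x y, In x L -> In y L -> f x = f y -> x = y) ->
  (forall x, In x L -> In (f x) L') -> (length L <= length L')%nat.
Proof.
  intros Hnd Hinj Hin. rewrite <- (length_map f L). apply NoDup_incl_length.
  - apply NoDup_map_NoDup_ForallPairs; auto.
  - intros y Hy. apply in_map_iff in Hy. destruct Hy as [x [<- Hx]]. auto.
Qed.

Lemma length_le_surjection {A B} (f : A -> B) (L : list A) (L' : list B) :
  NoDup L' -> (forall y, In y L' -> exists x, In x L /\ f x = y) ->
  (length L' <= length L)%nat.
Proof.
  intros Hnd Hsurj. rewrite <- (length_map f L). apply NoDup_incl_length; auto.
  intros y Hy. apply in_map_iff. destruct (Hsurj y Hy) as [x [Hx <-]]. eauto.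
Qed.

Lemma nodup_list_prod {A B} (l : list A) (l' : list B) :
  NoDup l -> NoDup l' -> NoDup (list_prod l l').
Proof.
  induction 1; intros H'; simpl; [constructor|].
  apply NoDup_app; auto.
  - apply NoDup_map_NoDup_ForallPairs; auto. intros u v _ _ [= ->]; auto.
  - intros [u v] H1 H2. apply in_map_iff in H1. destruct H1 as [w [[= <- <-] _]].
    apply in_prod_iff in H2. tauto.
Qed.

Fixpoint ones (l : list bool) : nat :=
  match l with [] => 0 | b :: l' => (if b then 1 else 0) + ones l' end%nat.

Lemma ones_app a b : ones (a ++ b) = (ones a + ones b)%nat.
Proof. induction a; simpl; lia. Qed.

Fixpoint binom (n k : nat) : nat :=
  match n, k with
  | _, O => 1
  | O, S _ => 0
  | S n', S k' => binom n' k' + binom n' (S k')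
  end%nat.

Lemma binom_gt n k : (n < k)%nat -> binom n k = 0%nat.
Proof. revert k; induction n; intros [|k] H; simpl; try lia. rewrite !IHn; lia. Qed.

Lemma binom_n_0 n : binom n 0 = 1%nat.
Proof. destruct n; reflexivity. Qed.

Lemma binom_succ n k : ((k + 1) * binom n (k + 1) = (n - k) * binom n k)%nat.
Proof.
  revert k; induction n as [|n IH]; intros k.
  - rewrite Nat.add_1_r. simpl. lia.
  - destruct k as [|k].
    + specialize (IH 0%nat). simpl in *. rewrite binom_n_0 in *. lia.
    + rewrite Nat.add_1_r. cbn [binom].
      pose proof (IH (S k)) as E1. pose proof (IH k) as E2. rewrite Nat.add_1_r in E1, E2.
      replace (S n - S k)%nat with (n - k)%nat by lia.
      destruct (le_lt_dec n k).
      * rewrite (binom_gt n (S k)), (binom_gt n (S (S k))) by lia.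
        destruct (Nat.eq_dec n k) as [->|]; [rewrite Nat.sub_diag; lia|].
        rewrite (binom_gt n k) by lia. lia.
      * replace (n - S k)%nat with (n - k - 1)%nat in E1 by lia. nia.
Qed.

Lemma in_all_paths n l : In l (all_paths n) <-> length l = n.
Proof.
  revert l; induction n; intros l; simpl.
  - split; [intros [<-|[]]; reflexivity | destruct l; simpl; try discriminate; auto].
  - rewrite in_app_iff, !in_map_iff. split.
    + intros [[x [<- Hx]]|[x [<- Hx]]]; simpl; f_equal; apply IHn; auto.
    + destruct l as [|b l]; simpl; try discriminate. intros [= H].
      destruct b; [left|right]; exists l; split; auto; apply IHn; auto.
Qed.

Lemma nodup_all_paths n : NoDup (all_paths n).
Proof.
  induction n; simpl.
  - repeat constructor. intros [].
  - apply NoDup_app.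
    + apply NoDup_map_NoDup_ForallPairs; auto. intros x y _ _ [= ->]; auto.
    + apply NoDup_map_NoDup_ForallPairs; auto. intros x y _ _ [= ->]; auto.
    + intros x H1 H2. apply in_map_iff in H1, H2.
      destruct H1 as [? [<- _]], H2 as [? [[=] _]].
Qed.

Definition bits (n j : nat) : list (list bool) :=
  filter (fun l => Nat.eqb (ones l) j) (all_paths n).

Lemma in_bits n j l : In l (bits n j) <-> length l = n /\ ones l = j.
Proof. unfold bits. rewrite filter_In, in_all_paths, Nat.eqb_eq. tauto. Qed.

Lemma length_bits n j : length (bits n j) = binom n j.
Proof.
  assert (Hmap : forall (P : list bool -> bool) b L,
    length (filter P (map (cons b) L)) = length (filter (fun l => P (b :: l)) L)).
  { intros P b L. induction L; simpl; auto. destruct (P (b :: a)); simpl; auto. }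
  revert j; induction n; intros j; unfold bits in *; simpl.
  - destruct j; reflexivity.
  - rewrite filter_app, length_app, !Hmap. simpl. destruct j as [|j].
    + rewrite IHn, binom_n_0. simpl.
      clear. induction (all_paths n); simpl; auto.
    + rewrite !IHn. reflexivity.
Qed.

Lemma nodup_bits n j : NoDup (bits n j).
Proof. apply NoDup_filter, nodup_all_paths. Qed.

Definition bit_pairs (n p q : nat) : list (list bool * list bool) :=
  list_prod (bits n p) (bits n q).

Lemma length_bit_pairs n p q : length (bit_pairs n p q) = (binom n p * binom n q)%nat.
Proof. unfold bit_pairs. rewrite length_prod, !length_bits. reflexivity. Qed.

Lemma in_bit_pairs n p q y : In y (bit_pairs n p q) <->
  length (fst y) = n /\ ones (fst y) = p /\ length (snd y) = n /\ ones (snd y) = q.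
Proof. destruct y. unfold bit_pairs. rewrite in_prod_iff, !in_bits. simpl. tauto. Qed.

Lemma nodup_bit_pairs n p q : NoDup (bit_pairs n p q).
Proof. apply nodup_list_prod; apply nodup_bits. Qed.

Section Walks.
Local Open Scope Z_scope.

Definition b2z (b : bool) : Z := if b then 1 else 0.

Fixpoint incr (a q : list bool) : list Z :=
  match a, q with
  | x :: a', y :: q' => (b2z x - b2z y) :: incr a' q'
  | _, _ => []
  end.

Fixpoint total (l : list Z) : Z :=
  match l with [] => 0 | d :: l' => d + total l' end.

Fixpoint max_psum (l : list Z) : Z :=
  match l with [] => 0 | d :: l' => Z.max 0 (d + max_psum l') end.

Definition psum (j : nat) (l : list Z) : Z := total (firstn j l).

Lemma max_psum_nonneg l : 0 <= max_psum l.
Proof. destruct l; simpl; lia. Qed.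

Lemma total_le_max_psum l : total l <= max_psum l.
Proof. induction l; simpl; lia. Qed.

Lemma total_app u w : total (u ++ w) = total u + total w.
Proof. induction u; simpl; lia. Qed.

Lemma max_psum_app u w : max_psum (u ++ w) = Z.max (max_psum u) (total u + max_psum w).
Proof.
  induction u; simpl.
  - pose proof (max_psum_nonneg w); lia.
  - rewrite IHu. pose proof (max_psum_nonneg u). lia.
Qed.

Lemma total_opp l : total (map Z.opp l) = - total l.
Proof. induction l; simpl; lia. Qed.

Lemma psum_all l : psum (length l) l = total l.
Proof. unfold psum. rewrite firstn_all. reflexivity. Qed.

Lemma total_split r l : total l = psum r l + total (skipn r l).
Proof. unfold psum. rewrite <- total_app, firstn_skipn. reflexivity. Qed.

Lemma ones_cons x a : Z.of_nat (ones (x :: a)) = b2z x + Z.of_nat (ones a).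
Proof. destruct x; cbn [ones b2z]; lia. Qed.

Lemma length_incr a q : length a = length q -> length (incr a q) = length a.
Proof.
  revert q; induction a as [|x a IH]; intros [|y q] H; simpl in *; try lia.
  rewrite IH; lia.
Qed.

Lemma total_incr a q : length a = length q ->
  total (incr a q) = Z.of_nat (ones a) - Z.of_nat (ones q).
Proof.
  revert q; induction a as [|x a IH]; intros [|y q] H; cbn [length incr total] in *; try lia.
  rewrite IH, !ones_cons by lia. lia.
Qed.

Lemma max_psum_incr_le a q : max_psum (incr a q) <= Z.of_nat (ones a).
Proof.
  revert q; induction a as [|x a IH]; intros [|y q]; cbn [incr max_psum]; try lia.
  specialize (IH q). rewrite ones_cons. destruct x, y; unfold b2z; lia.
Qed.

Lemma incr_le_1 a q d : In d (incr a q) -> d <= 1.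
Proof.
  revert q; induction a as [|x a IH]; intros [|y q]; simpl; try tauto.
  intros [<-|H]; eauto. destruct x, y; simpl; lia.
Qed.

Lemma incr_app a1 a2 q1 q2 : length a1 = length q1 ->
  incr (a1 ++ a2) (q1 ++ q2) = incr a1 q1 ++ incr a2 q2.
Proof.
  revert q1; induction a1 as [|x a1 IH]; intros [|y q1] H; simpl in *; try lia; auto.
  rewrite IH by lia. reflexivity.
Qed.

Lemma incr_firstn t a q : incr (firstn t a) (firstn t q) = firstn t (incr a q).
Proof.
  revert a q; induction t; intros [|x a] [|y q]; simpl; auto. rewrite IHt; auto.
Qed.

Lemma incr_skipn t a q : incr (skipn t a) (skipn t q) = skipn t (incr a q).
Proof.
  revert a q; induction t; intros [|x a] [|y q]; simpl; auto. destruct (skipn t a); auto.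
Qed.

Lemma incr_swap a q : incr q a = map Z.opp (incr a q).
Proof.
  revert q; induction a as [|x a IH]; intros [|y q]; simpl; auto.
  rewrite IH. f_equal. destruct x, y; simpl; lia.
Qed.

Definition rotl {A} (r : nat) (l : list A) : list A := skipn r l ++ firstn r l.

Lemma length_rotl {A} r (l : list A) : length (rotl r l) = length l.
Proof. unfold rotl. rewrite length_app, length_skipn, length_firstn. lia. Qed.

Lemma ones_rotl r a : ones (rotl r a) = ones a.
Proof. unfold rotl. rewrite <- (firstn_skipn r a) at 3. rewrite !ones_app. lia. Qed.

Lemma incr_rotl r a q : length a = length q -> incr (rotl r a) (rotl r q) = rotl r (incr a q).
Proof.
  intros H. unfold rotl. rewrite incr_app, incr_skipn, incr_firstn; auto.
  rewrite !length_skipn. lia.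
Qed.

Lemma firstn_add {A} r i (l : list A) : firstn (r + i) l = firstn r l ++ firstn i (skipn r l).
Proof.
  revert l; induction r; intros [|x l]; simpl; auto. destruct i; auto. rewrite IHr; auto.
Qed.

Lemma rotl_add {A} a b (l : list A) : (a + b <= length l)%nat -> rotl a (rotl b l) = rotl (a + b) l.
Proof.
  intros H. unfold rotl. rewrite skipn_app, firstn_app, length_skipn.
  replace (a - (length l - b))%nat with 0%nat by lia. simpl. rewrite app_nil_r.
  rewrite skipn_skipn, <- app_assoc. f_equal. rewrite Nat.add_comm, firstn_add. reflexivity.
Qed.

Lemma rotl_length {A} (l : list A) : rotl (length l) l = l.
Proof. unfold rotl. rewrite skipn_all2, firstn_all by lia. reflexivity. Qed.

Lemma max_psum_rotl r l : total l = 1 ->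
  max_psum l - 1 <= max_psum (rotl r l) + max_psum (map Z.opp (rotl r l)).
Proof.
  intros Hs. unfold rotl. rewrite <- (firstn_skipn r l) in Hs |- * at 1.
  set (u := firstn r l) in *. set (w := skipn r l) in *.
  rewrite total_app in Hs. rewrite map_app, !max_psum_app, total_opp.
  pose proof (max_psum_nonneg u). pose proof (max_psum_nonneg w).
  pose proof (max_psum_nonneg (map Z.opp u)). pose proof (max_psum_nonneg (map Z.opp w)).
  pose proof (total_le_max_psum (map Z.opp u)). pose proof (total_le_max_psum (map Z.opp w)).
  rewrite total_opp in *. lia.
Qed.

End Walks.

Section CycleLemma.
Local Open Scope Z_scope.

Fixpoint stays_positive (v : Z) (l : list Z) : bool :=
  match l with [] => true | d :: l' => (1 <=? v + d) && stays_positive (v + d) l' end.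

Lemma stays_positive_iff v l : stays_positive v l = true <->
  (forall j, (1 <= j <= length l)%nat -> 1 <= v + psum j l).
Proof.
  revert v; induction l as [|d l IH]; intros v; cbn [stays_positive length].
  - split; auto. intros _ j Hj; lia.
  - rewrite andb_true_iff, Z.leb_le, IH. unfold psum. split.
    + intros [H1 H2] [|[|j]] Hj; try lia; cbn [firstn total]; [lia|].
      specialize (H2 (S j)). cbn [firstn total] in H2. lia.
    + intros H. split.
      * specialize (H 1%nat). cbn [firstn total] in H. lia.
      * intros j Hj. specialize (H (S j)). cbn [firstn total] in H. lia.
Qed.

Lemma cycle_lemma_unique l d : total l = 1 ->
  stays_positive 0 l = true -> stays_positive 0 (rotl d l) = true ->
  ~ (0 < d < length l)%nat.
Proof.
  intros Hs H1 H2 Hd. rewrite stays_positive_iff in H1, H2.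
  specialize (H1 d ltac:(lia)).
  rewrite length_rotl in H2. specialize (H2 (length l - d)%nat ltac:(lia)).
  unfold psum, rotl in H2. rewrite firstn_app, length_skipn, Nat.sub_diag in H2.
  rewrite firstn_all2 in H2 by (rewrite length_skipn; lia).
  simpl in H2. rewrite app_nil_r in H2.
  pose proof (total_split d l). lia.
Qed.

Lemma last_argmin (f : nat -> Z) m : exists r, (r <= m)%nat /\
  (forall j, (j <= m)%nat -> f r <= f j) /\ (forall j, (r < j <= m)%nat -> f r < f j).
Proof.
  induction m as [|m [r [Hr [H1 H2]]]].
  - exists 0%nat. split; [lia|]. split; intros j Hj; [replace j with 0%nat by lia|]; lia.
  - destruct (Z_le_gt_dec (f (S m)) (f r)).
    + exists (S m). repeat split; [lia| |intros; lia].
      intros j Hj. destruct (Nat.eq_dec j (S m)); [subst; lia|]. specialize (H1 j ltac:(lia)). lia.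
    + exists r. repeat split; [lia| |]; intros j Hj;
        (destruct (Nat.eq_dec j (S m)); [subst; lia|]); [apply H1|apply H2]; lia.
Qed.

(* Cycle lemma, existence: rotating a nonempty walk of total 1 to start just after
   the last minimum of its partial sums makes all partial sums positive. *)
Lemma cycle_lemma_exists l : total l = 1 -> (0 < length l)%nat ->
  exists r, (r < length l)%nat /\ stays_positive 0 (rotl r l) = true.
Proof.
  intros Hs Hn. set (n := length l) in *.
  destruct (last_argmin (fun j => psum j l) (n - 1)) as [r [Hr [H1 H2]]].
  exists r. split; [lia|]. apply stays_positive_iff. rewrite length_rotl. intros i Hi.
  unfold psum at 1, rotl. rewrite firstn_app, length_skipn, total_app. fold n.
  pose proof (H1 0%nat ltac:(lia)) as H0. unfold psum in H0 at 2. simpl in H0.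
  destruct (le_lt_dec i (n - r)) as [Hi2|Hi2].
  - replace (i - (n - r))%nat with 0%nat by lia. simpl.
    assert (E : psum (r + i) l = psum r l + total (firstn i (skipn r l))).
    { unfold psum. rewrite firstn_add, total_app. reflexivity. }
    destruct (Nat.eq_dec (r + i) n) as [Heq|Hne].
    + rewrite Heq in E. unfold n in E. rewrite psum_all in E. lia.
    + specialize (H2 (r + i)%nat ltac:(lia)). lia.
  - rewrite firstn_all2 by (rewrite length_skipn; lia).
    rewrite firstn_firstn, Nat.min_l by lia.
    pose proof (total_split r l).
    specialize (H1 (i - (n - r))%nat ltac:(lia)). unfold psum in H1 at 2. lia.
Qed.

End CycleLemma.

Section Reflection.
Local Open Scope Z_scope.

Fixpoint first_hit (h : Z) (l : list Z) : nat :=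
  match l with [] => O | d :: l' => if Z.eqb h 0 then O else S (first_hit (h - d) l') end.

Lemma first_hit_spec l h : 0 <= h <= max_psum l -> (forall d, In d l -> d <= 1) ->
  (first_hit h l <= length l)%nat /\ psum (first_hit h l) l = h.
Proof.
  unfold psum. revert h; induction l as [|d l IH]; intros h Hh Hl; cbn [first_hit max_psum length] in *.
  - simpl. lia.
  - destruct (Z.eqb_spec h 0); [simpl; lia|].
    assert (d <= 1) by (apply Hl; left; auto).
    destruct (IH (h - d)) as [IH1 IH2]; [lia|intros; apply Hl; right; auto|].
    cbn [firstn total]. lia.
Qed.

Lemma first_hit_prefix l h w : psum (first_hit h l) l = h ->
  first_hit h (firstn (first_hit h l) l ++ w) = first_hit h l.
Proof.
  unfold psum. revert h; induction l as [|d l IH]; intros h H; cbn [first_hit] in *.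
  - simpl in *. subst. destruct w; reflexivity.
  - destruct (Z.eqb_spec h 0); [subst; destruct w; reflexivity|].
    cbn [firstn total app] in *. cbn [first_hit].
    rewrite (proj2 (Z.eqb_neq h 0) n), IH by lia. reflexivity.
Qed.

Definition swap_tails (t : nat) (y : list bool * list bool) : list bool * list bool :=
  (firstn t (fst y) ++ skipn t (snd y), firstn t (snd y) ++ skipn t (fst y)).

Lemma incr_swap_tails t a q : length a = length q ->
  incr (fst (swap_tails t (a, q))) (snd (swap_tails t (a, q))) =
  firstn t (incr a q) ++ map Z.opp (skipn t (incr a q)).
Proof.
  intros H. simpl. rewrite incr_app by (rewrite !length_firstn; lia).
  rewrite incr_firstn, (incr_swap (skipn t a) (skipn t q)), incr_skipn. reflexivity.
Qed.

Lemma swap_tails_involutive t y : (t <= length (fst y))%nat -> (t <= length (snd y))%nat ->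
  swap_tails t (swap_tails t y) = y.
Proof.
  assert (Half : forall (x u z : list bool), (t <= length x)%nat -> (t <= length z)%nat ->
    firstn t (firstn t x ++ u) ++ skipn t (firstn t z ++ skipn t x) = x).
  { intros x u z Hx Hz.
    rewrite firstn_app, skipn_app, !length_firstn, !Nat.min_l, Nat.sub_diag by lia.
    rewrite firstn_firstn, Nat.min_id, skipn_all2 by (rewrite length_firstn; lia).
    simpl. rewrite app_nil_r, firstn_skipn. reflexivity. }
  destruct y as [a q]. unfold swap_tails; simpl. intros Ha Hq. f_equal; apply Half; auto.
Qed.

Definition high_pairs (n p q h : nat) : list (list bool * list bool) :=
  filter (fun y => Z.of_nat h <=? max_psum (incr (fst y) (snd y))) (bit_pairs n p q).

Lemma in_high_pairs n p q h y : In y (high_pairs n p q h) <->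
  In y (bit_pairs n p q) /\ Z.of_nat h <= max_psum (incr (fst y) (snd y)).
Proof. unfold high_pairs. rewrite filter_In, Z.leb_le. tauto. Qed.

(* A walk of (a, q) never exceeds the number of ones of a. *)
Lemma high_pairs_nil n p q h : (p < h)%nat -> high_pairs n p q h = [].
Proof.
  intros Hph. destruct (high_pairs n p q h) as [|y l] eqn:E; auto.
  assert (Hy : In y (high_pairs n p q h)) by (rewrite E; left; auto).
  apply in_high_pairs in Hy. destruct Hy as [Hy Hh]. apply in_bit_pairs in Hy.
  pose proof (max_psum_incr_le (fst y) (snd y)). lia.
Qed.

Definition reflect_at (h : nat) (y : list bool * list bool) : list bool * list bool :=
  swap_tails (first_hit (Z.of_nat h) (incr (fst y) (snd y))) y.

Lemma reflect_at_spec n p q h y : In y (high_pairs n p q h) ->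
  let t := first_hit (Z.of_nat h) (incr (fst y) (snd y)) in
  (t <= n)%nat /\ psum t (incr (fst y) (snd y)) = Z.of_nat h /\
  first_hit (Z.of_nat h) (incr (fst (reflect_at h y)) (snd (reflect_at h y))) = t.
Proof.
  intros Hy t. apply in_high_pairs in Hy. destruct y as [a q']. simpl in *.
  destruct Hy as [Hy Hh]. apply in_bit_pairs in Hy. simpl in Hy.
  destruct (first_hit_spec (incr a q') (Z.of_nat h)) as [F1 F2]; [lia|apply incr_le_1|].
  rewrite length_incr in F1 by lia. fold t in F1, F2.
  repeat split; auto; [lia|]. unfold reflect_at. cbn [fst snd]. fold t.
  pose proof (incr_swap_tails t a q' ltac:(lia)) as E. simpl in E. rewrite E.
  unfold t at 2. apply first_hit_prefix. auto.
Qed.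

Lemma reflection_count n p q h :
  (length (high_pairs n p q h) <= binom n (q + h) * binom n (p - h))%nat.
Proof.
  rewrite <- length_bit_pairs. apply (length_le_injection (reflect_at h)).
  - apply NoDup_filter, nodup_bit_pairs.
  - intros x y Hx Hy E.
    destruct (reflect_at_spec _ _ _ _ _ Hx) as [Tx [_ Ex]].
    destruct (reflect_at_spec _ _ _ _ _ Hy) as [Ty [_ Ey]].
    apply in_high_pairs, proj1, in_bit_pairs in Hx, Hy.
    rewrite E, Ey in Ex. unfold reflect_at in E. rewrite Ex in E.
    set (t := first_hit _ (incr (fst x) (snd x))) in *.
    rewrite <- (swap_tails_involutive t x), E, swap_tails_involutive by lia. reflexivity.
  - intros [a q'] Hy. pose proof (reflect_at_spec _ _ _ _ _ Hy) as [Ht [Hs _]].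
    apply in_high_pairs in Hy. destruct Hy as [Hy Hh]. apply in_bit_pairs in Hy.
    simpl in *. destruct Hy as [La [Oa [Lq Oq]]].
    pose proof (max_psum_incr_le a q'). revert Ht Hs. unfold reflect_at. simpl.
    set (t := first_hit _ _). intros Ht Hs.
    unfold psum in Hs. rewrite <- incr_firstn, total_incr in Hs by (rewrite !length_firstn; lia).
    pose proof (ones_app (firstn t a) (skipn t a)). pose proof (ones_app (firstn t q') (skipn t q')).
    rewrite !firstn_skipn in *.
    apply in_bit_pairs. simpl. rewrite !length_app, !length_firstn, !length_skipn, !ones_app. lia.
Qed.

End Reflection.

Section Encoding.
Local Open Scope Z_scope.

(* A path is read as pairs (odd step o_i, even step e_i).  It is encoded by the
   string a of its odd steps and the string q with q_1 = down and q_(i+1) = the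
   complement of e_i; [prev] holds the even step preceding the current pair. *)
Fixpoint odds (p : list bool) : list bool :=
  match p with o :: e :: r => o :: odds r | _ => [] end.

Fixpoint shifted_evens (prev : bool) (p : list bool) : list bool :=
  match p with o :: e :: r => negb prev :: shifted_evens e r | _ => [] end.

(* The last even step, which the encoding forgets. *)
Fixpoint last_even (prev : bool) (p : list bool) : bool :=
  match p with o :: e :: r => last_even e r | _ => prev end.

Definition enc (p : list bool) : list bool * list bool := (odds p, shifted_evens true p).

(* The walk of a path: after the i-th pair its partial sum S_i gives the height
   2 S_i - 1 reached at the i-th odd time. *)
Definition path_walk (p : list bool) : list Z := incr (odds p) (shifted_evens true p).

Lemma length_odds n p : length p = (2 * n)%nat -> length (odds p) = n.
Proof.
  revert p; induction n; intros [|o [|e r]] H; simpl in *; try lia. rewrite (IHn r); lia.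
Qed.

Lemma length_shifted_evens n p prev : length p = (2 * n)%nat -> length (shifted_evens prev p) = n.
Proof.
  revert p prev; induction n; intros [|o [|e r]] prev H; simpl in *; try lia.
  rewrite (IHn r); lia.
Qed.

Lemma odd_ups_odds n p : length p = (2 * n)%nat -> odd_ups p = ones (odds p).
Proof.
  unfold odd_ups. revert p; induction n; intros [|o [|e r]] H; simpl in *; try lia.
  rewrite (IHn r) by lia. destruct o; reflexivity.
Qed.

(* Invariant of the three lemmas below: before each pair the height is
   2 (v - [prev = down]), where v is the current value of the walk. *)
Lemma heights_nonneg n p : forall v prev hh, length p = (2 * n)%nat ->
  hh = 2 * (v - b2z (negb prev)) ->
  forallb (fun h => 0 <=? h) (heights_from hh p) = stays_positive v (incr (odds p) (shifted_evens prev p)).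
Proof.
  revert p; induction n; intros [|o [|e r]] v prev hh H Hh; simpl in H; try lia; [reflexivity|].
  cbn [heights_from odds shifted_evens incr stays_positive forallb].
  rewrite (IHn r (v + (b2z o - b2z (negb prev))) e)
    by (try lia; destruct o, e, prev; cbn [negb b2z] in *; lia).
  destruct o, e, prev; cbn [negb b2z] in *;
  destruct (Z.leb_spec 0 (hh+1)), (Z.leb_spec 0 (hh-1)), (Z.leb_spec 0 (hh+1+1)),
    (Z.leb_spec 0 (hh+1-1)), (Z.leb_spec 0 (hh-1+1)), (Z.leb_spec 0 (hh-1-1));
  repeat match goal with |- context [(1 <=? ?x)] => destruct (Z.leb_spec 1 x) end;
  simpl; try lia; reflexivity.
Qed.

Lemma heights_max n p : forall v prev hh, length p = (2 * n)%nat ->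
  hh = 2 * (v - b2z (negb prev)) ->
  fold_right Z.max 0 (heights_from hh p) <= Z.max 0 (2 * (v + max_psum (incr (odds p) (shifted_evens prev p)))).
Proof.
  revert p; induction n; intros [|o [|e r]] v prev hh H Hh; simpl in H; try lia.
  - simpl. lia.
  - cbn [heights_from odds shifted_evens incr max_psum fold_right].
    pose proof (IHn r (v + (b2z o - b2z (negb prev))) e
      (if e then (if o then hh + 1 else hh - 1) + 1 else (if o then hh + 1 else hh - 1) - 1)
      ltac:(lia)) as IH.
    pose proof (max_psum_nonneg (incr (odds r) (shifted_evens e r))).
    destruct o, e, prev; cbn [negb b2z] in *; specialize (IH ltac:(lia)); lia.
Qed.

Lemma heights_last n p : forall v prev hh, length p = (2 * n)%nat ->
  hh = 2 * (v - b2z (negb prev)) ->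
  last (hh :: heights_from hh p) 0 =
  2 * (v + total (incr (odds p) (shifted_evens prev p))) - 2 * b2z (negb (last_even prev p)).
Proof.
  revert p; induction n; intros [|o [|e r]] v prev hh H Hh; simpl in H; try lia.
  - cbn [heights_from odds shifted_evens incr total last_even last]. lia.
  - cbn [heights_from odds shifted_evens incr total last_even].
    change (last (_ :: _ :: ?l) 0) with (last l 0).
    rewrite (IHn r (v + (b2z o - b2z (negb prev))) e)
      by (try lia; destruct o, e, prev; cbn [negb b2z] in *; lia). lia.
Qed.

Lemma length_path_walk s p : length p = (2 * s)%nat -> length (path_walk p) = s.
Proof.
  intros Hl. unfold path_walk. rewrite length_incr, (length_odds s); auto.
  rewrite (length_odds s), (length_shifted_evens s); auto.
Qed.

Lemma is_dyck_iff s p : (1 <= s)%nat -> length p = (2 * s)%nat ->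
  is_dyck p = true <->
  stays_positive 0 (path_walk p) = true /\ total (path_walk p) = 1 /\ last_even true p = false.
Proof.
  intros Hs Hl. pose proof (length_path_walk s p Hl) as Lw.
  pose proof (heights_last s p 0 true 0 Hl eq_refl) as HL. simpl last in HL.
  unfold is_dyck. rewrite andb_true_iff, Z.eqb_eq, (heights_nonneg s p 0 true 0 Hl eq_refl).
  fold (path_walk p) in *. simpl last. split.
  - intros [G Hlast]. split; auto.
    assert (1 <= total (path_walk p)).
    { rewrite stays_positive_iff in G. specialize (G s ltac:(lia)).
      rewrite <- Lw, psum_all in G. lia. }
    destruct (last_even true p); cbn [negb b2z] in HL; split; auto; lia.
  - intros [G [T L]]. split; auto. rewrite HL, T, L. reflexivity.
Qed.

Lemma enc_inj n p p' prev : length p = (2 * n)%nat -> length p' = (2 * n)%nat ->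
  odds p = odds p' -> shifted_evens prev p = shifted_evens prev p' -> last_even prev p = last_even prev p' ->
  p = p'.
Proof.
  revert p p' prev; induction n;
    intros [|o [|e r]] [|o' [|e' r']] prev H H' H1 H2 H3; simpl in *; try lia; auto.
  injection H1 as -> H1. injection H2 as H2.
  destruct r as [|x [|y r]]; simpl in H; try lia.
  - destruct r' as [|x' r']; simpl in *; try lia. subst. reflexivity.
  - destruct r' as [|x' [|y' r']]; simpl in H'; try lia. simpl in H2.
    injection H2 as H2a H2. assert (e = e') by (destruct e, e'; simpl in *; congruence). subst e'.
    f_equal; f_equal. apply (IHn _ _ e); simpl; try lia; auto. f_equal; auto.
Qed.

Fixpoint interleave (a e : list bool) : list bool :=
  match a, e with x :: a', y :: e' => x :: y :: interleave a' e' | _, _ => [] end.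

Lemma length_interleave a e : length a = length e -> length (interleave a e) = (2 * length a)%nat.
Proof. revert e; induction a; intros [|y e] H; simpl in *; try lia. rewrite IHa; lia. Qed.

Lemma odds_interleave a e : length a = length e -> odds (interleave a e) = a.
Proof. revert e; induction a; intros [|y e] H; simpl in *; try lia; auto. rewrite IHa; auto. Qed.

Lemma shifted_evens_interleave a e prev : length a = length e -> (1 <= length a)%nat ->
  shifted_evens prev (interleave a e) = negb prev :: map negb (removelast e).
Proof.
  revert e prev; induction a as [|x [|x' a] IH]; intros [|y e] prev H H1; simpl in *; try lia.
  - destruct e; simpl in *; try lia. reflexivity.
  - destruct e as [|y' e]; simpl in *; try lia.
    specialize (IH (y' :: e) y ltac:(simpl; lia) ltac:(simpl; lia)). simpl in IH.
    rewrite IH. reflexivity.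
Qed.

Lemma last_even_interleave a e prev : length a = length e -> last_even prev (interleave a e) = last e prev.
Proof.
  revert e prev; induction a as [|x a IH]; intros [|y e] prev H; simpl in *; try lia; auto.
  rewrite IH by lia. destruct e as [|z e]; auto.
  clear. revert z; induction e; intros z; [reflexivity|]. apply IHe.
Qed.

Lemma in_X s k p : In p (X s k) <-> length p = (2 * s)%nat /\ is_dyck p = true /\ odd_ups p = k.
Proof. unfold X. rewrite filter_In, in_all_paths, andb_true_iff, Nat.eqb_eq. tauto. Qed.

Lemma nodup_X s k : NoDup (X s k).
Proof. apply NoDup_filter, nodup_all_paths. Qed.

Lemma X_encode s k p : (1 <= s)%nat -> In p (X s k) ->
  (1 <= k)%nat /\ In (enc p) (bit_pairs s k (k - 1)) /\
  stays_positive 0 (path_walk p) = true /\ total (path_walk p) = 1 /\ last_even true p = false.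
Proof.
  intros Hs Hp. apply in_X in Hp. destruct Hp as [Hl [Hd Hk]].
  apply (is_dyck_iff s p Hs Hl) in Hd. destruct Hd as [G [T L]].
  pose proof (length_odds s p Hl) as La. pose proof (length_shifted_evens s p true Hl) as Lq.
  pose proof T as Hones. unfold path_walk in Hones. rewrite total_incr in Hones by lia.
  rewrite (odd_ups_odds s p Hl) in Hk.
  repeat split; auto; try lia. apply in_bit_pairs. unfold enc; simpl. lia.
Qed.

Lemma max_height_le_walk s p : length p = (2 * s)%nat -> max_height p <= 2 * max_psum (path_walk p).
Proof.
  intros Hl. pose proof (heights_max s p 0 true 0 Hl eq_refl).
  pose proof (max_psum_nonneg (path_walk p)). unfold max_height, path_walk in *. lia.
Qed.

(* Conversely every such pair encodes a path of X_{s,k}: its even steps are the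
   complements of q_2, ..., q_s followed by a final down step. *)
Lemma X_decode s k y : (1 <= s)%nat -> (1 <= k)%nat -> In y (bit_pairs s k (k - 1)) ->
  stays_positive 0 (incr (fst y) (snd y)) = true -> exists p, In p (X s k) /\ enc p = y.
Proof.
  intros Hs Hk Hy G. destruct y as [a q]. apply in_bit_pairs in Hy. simpl in *.
  destruct Hy as [La [Oa [Lq Oq]]].
  destruct a as [|x a], q as [|z q]; simpl in La, Lq; try lia.
  assert (Hz : z = false).
  { cbn [incr stays_positive] in G. apply andb_true_iff, proj1, Z.leb_le in G.
    destruct x, z; cbn [b2z] in G; auto; lia. }
  subst z. set (e := map negb q ++ [false]).
  assert (Le : length e = S (length a)) by (unfold e; rewrite length_app, length_map; simpl; lia).
  assert (Od : odds (interleave (x :: a) e) = x :: a) by (apply odds_interleave; simpl; lia).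
  assert (Eq : shifted_evens true (interleave (x :: a) e) = false :: q).
  { rewrite shifted_evens_interleave by (simpl; lia). unfold e. rewrite removelast_last, map_map.
    simpl. f_equal. rewrite <- (map_id q) at 2. apply map_ext. intros []; reflexivity. }
  assert (Lv : last_even true (interleave (x :: a) e) = false).
  { rewrite last_even_interleave by (simpl; lia). unfold e. apply last_last. }
  assert (Len : length (interleave (x :: a) e) = (2 * s)%nat)
    by (rewrite length_interleave; simpl; lia).
  exists (interleave (x :: a) e). unfold enc. rewrite Od, Eq. split; auto.
  apply in_X. repeat split; auto.
  - apply (is_dyck_iff s _ Hs Len). unfold path_walk. rewrite Od, Eq. repeat split; auto.
    rewrite total_incr by (simpl; lia). simpl b2z. lia.
  - rewrite (odd_ups_odds s _ Len), Od. auto.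
Qed.

End Encoding.

Section Rotations.
Local Open Scope Z_scope.

Definition rot_pair (r : nat) (y : list bool * list bool) : list bool * list bool :=
  (rotl r (fst y), rotl r (snd y)).

Definition swap_pair (y : list bool * list bool) : list bool * list bool := (snd y, fst y).

Definition rotate_enc (pr : list bool * nat) : list bool * list bool :=
  rot_pair (snd pr) (enc (fst pr)).

Lemma rot_pair_in n p q r y : In y (bit_pairs n p q) -> In (rot_pair r y) (bit_pairs n p q).
Proof.
  intros H. apply in_bit_pairs in H. apply in_bit_pairs. destruct y; simpl in *.
  rewrite !length_rotl, !ones_rotl. auto.
Qed.

Lemma incr_rot_enc s p r : length p = (2 * s)%nat ->
  incr (fst (rot_pair r (enc p))) (snd (rot_pair r (enc p))) = rotl r (path_walk p).
Proof.
  intros Hl. apply incr_rotl. simpl. rewrite (length_odds s), (length_shifted_evens s); auto.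
Qed.

Lemma rotl_eq_rotl {A} s r r' (x x' : list A) : length x = s -> length x' = s ->
  (r <= r' <= s)%nat -> rotl r x = rotl r' x' -> x' = rotl (s - r' + r) x.
Proof.
  intros Lx Lx' Hr E. rewrite <- (rotl_length x'), Lx'. replace s with (s - r' + r')%nat at 1 by lia.
  rewrite <- rotl_add, <- E, rotl_add by (rewrite ?length_rotl; lia). reflexivity.
Qed.

(* By the cycle lemma, distinct (path, rotation) pairs have distinct rotated encodings. *)
Lemma rotate_enc_injective_le s k p p' r r' : (1 <= s)%nat ->
  In p (X s k) -> In p' (X s k) -> (1 <= r <= r')%nat -> (r' <= s)%nat ->
  rotate_enc (p, r) = rotate_enc (p', r') -> p = p' /\ r = r'.
Proof.
  intros Hs Hp Hp' Hr Hr' E.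
  destruct (X_encode s k p Hs Hp) as [_ [W1 [G1 [T1 L1]]]].
  destruct (X_encode s k p' Hs Hp') as [_ [W2 [G2 [_ L2]]]].
  apply in_bit_pairs in W2. unfold enc in W2; simpl in W2.
  apply in_bit_pairs in W1. unfold enc in W1; simpl in W1. destruct W1 as [La [_ [Lq _]]].
  unfold rotate_enc, rot_pair, enc in E. simpl in E. injection E as Ea Eq.
  apply rotl_eq_rotl with (s := s) in Ea, Eq; try lia.
  destruct (Nat.eq_dec r r') as [<-|Hne].
  - replace (s - r + r)%nat with s in * by lia.
    rewrite <- La, rotl_length in Ea. rewrite <- Lq, rotl_length in Eq.
    split; auto. apply in_X in Hp, Hp'.
    apply (enc_inj s p p' true); tauto || congruence.
  - exfalso. apply (cycle_lemma_unique (path_walk p) (s - r' + r)); auto.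
    + unfold path_walk. rewrite <- incr_rotl, <- Ea, <- Eq by lia. exact G2.
    + unfold path_walk. rewrite length_incr by lia. lia.
Qed.

Lemma rotate_enc_injective s k x y : (1 <= s)%nat ->
  In (fst x) (X s k) -> In (fst y) (X s k) -> (1 <= snd x <= s)%nat -> (1 <= snd y <= s)%nat ->
  rotate_enc x = rotate_enc y -> x = y.
Proof.
  destruct x as [p r], y as [p' r']; simpl. intros Hs Hp Hp' Hr Hr' E.
  destruct (le_lt_dec r r').
  - destruct (rotate_enc_injective_le s k p p' r r') as [-> ->]; auto; lia.
  - destruct (rotate_enc_injective_le s k p' p r' r) as [-> ->]; auto; lia.
Qed.

(* Cycle lemma count: every pair with k and k - 1 ones is a rotation of the
   encoding of a path of X_{s,k}, so C(s,k) C(s,k-1) <= s |X_{s,k}|. *)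
Lemma X_lower s k : (1 <= s)%nat -> (1 <= k)%nat ->
  (binom s k * binom s (k - 1) <= length (X s k) * s)%nat.
Proof.
  intros Hs Hk. rewrite <- length_bit_pairs.
  replace (length (X s k) * s)%nat with (length (list_prod (X s k) (seq 1 s)))
    by (rewrite length_prod, length_seq; reflexivity).
  apply (length_le_surjection rotate_enc); [apply nodup_bit_pairs|].
  intros [a q] Hy. pose proof Hy as Hy'. apply in_bit_pairs in Hy'. simpl in Hy'.
  destruct Hy' as [La [Oa [Lq Oq]]].
  assert (T : total (incr a q) = 1) by (rewrite total_incr by lia; lia).
  destruct (cycle_lemma_exists (incr a q) T) as [r0 [Hr0 G0]]; [rewrite length_incr by lia; lia|].
  rewrite length_incr in Hr0 by lia.
  destruct (X_decode s k (rot_pair r0 (a, q)) Hs Hk) as [p [Hp Ep]].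
  - apply rot_pair_in; auto.
  - simpl. rewrite incr_rotl; auto. lia.
  - exists (p, (s - r0)%nat). split.
    + apply in_prod; auto. apply in_seq. lia.
    + unfold rotate_enc. simpl. rewrite Ep. unfold rot_pair. simpl. rewrite !rotl_add by lia.
      replace (s - r0 + r0)%nat with s by lia.
      rewrite <- La at 1. rewrite rotl_length, <- Lq, rotl_length. reflexivity.
Qed.

(* A path of height >= m >= 4H + 2 has a walk of maximum >= m/2, so every rotation
   of its walk has range >= m/2 - 1 and rises or falls by at least H. *)
Lemma rotation_is_high s k p r m H : (1 <= s)%nat -> In p (X s k) ->
  Z.of_nat m <= max_height p -> (4 * H + 2 <= m)%nat ->
  In (rot_pair r (enc p)) (high_pairs s k (k - 1) H) \/
  In (swap_pair (rot_pair r (enc p))) (high_pairs s (k - 1) k H).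
Proof.
  intros Hs Hp Hm HH.
  destruct (X_encode s k p Hs Hp) as [Hk [W1 [_ [T1 _]]]].
  pose proof (max_psum_rotl r _ T1) as Hrange.
  assert (Hl : length p = (2 * s)%nat) by (apply in_X in Hp; tauto).
  pose proof (max_height_le_walk s p Hl).
  assert (Wr : In (rot_pair r (enc p)) (bit_pairs s k (k - 1))) by (apply rot_pair_in; auto).
  rewrite !in_high_pairs.
  destruct (Z_le_gt_dec (Z.of_nat H) (max_psum (rotl r (path_walk p)))) as [B|B].
  - left. split; [exact Wr|]. rewrite (incr_rot_enc s p r Hl). exact B.
  - right. split.
    + apply in_bit_pairs in Wr. apply in_bit_pairs. simpl in *. tauto.
    + change (incr (fst (swap_pair ?y)) (snd (swap_pair ?y))) with (incr (snd y) (fst y)).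
      rewrite incr_swap, (incr_rot_enc s p r Hl). lia.
Qed.

Lemma tail_count s k m H : (1 <= s)%nat -> (4 * H + 2 <= m)%nat ->
  (length (filter (fun p => (Z.of_nat m <=? max_height p)%Z) (X s k)) * s <=
   length (high_pairs s k (k - 1) H) + length (high_pairs s (k - 1) k H))%nat.
Proof.
  intros Hs HH.
  set (T := filter (fun p => Z.of_nat m <=? max_height p) (X s k)).
  assert (HT : forall p, In p T <-> In p (X s k) /\ Z.of_nat m <= max_height p).
  { intros p. unfold T. rewrite filter_In, Z.leb_le. tauto. }
  replace (length T * s)%nat with (length (list_prod T (seq 1 s)))
    by (rewrite length_prod, length_seq; reflexivity).
  rewrite <- (length_map swap_pair (high_pairs s (k-1) k H)), <- length_app.
  apply (length_le_injection rotate_enc).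
  - apply nodup_list_prod; [apply NoDup_filter, nodup_X | apply seq_NoDup].
  - intros [p r] [p' r'] Hx Hy. apply in_prod_iff in Hx, Hy. rewrite HT, in_seq in Hx, Hy.
    apply (rotate_enc_injective s k); simpl; tauto || lia.
  - intros [p r] Hx. apply in_prod_iff in Hx. rewrite HT in Hx. destruct Hx as [[Hp Hm] _].
    apply in_app_iff. unfold rotate_enc. simpl.
    destruct (rotation_is_high s k p r m H) as [B|B]; auto.
    right. apply in_map_iff. eexists; split; [|exact B]. destruct (rot_pair r (enc p)); reflexivity.
Qed.

End Rotations.

Section BinomialDecay.
Local Open Scope R_scope.

Lemma ratio_polynomial S J K : 1 <= K -> K <= J -> J + 1 <= S -> J + 1 <= 2 * K - 1 ->
  (S - J) * (2 * K - 1 - J) * S <= (S - (J - K + 1)) * ((J + 1) * (S - (2 * K - 1 - J) + 1)).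
Proof.
  intros H1 H2 H3 H4.
  assert (S * (2 * K - 1 - J) <= (S - (J - K + 1)) * (J + 1)) by nra.
  assert (0 <= (S - (J - K + 1)) * (J + 1)) by nra.
  nra.
Qed.

(* If C' = C (S - J)/(J + 1) and D' = D M/(S - M + 1) with M = 2K - 1 - J, as for
   consecutive binomial coefficients, then C' D' <= C D (1 - (J - K + 1)/S). *)
Lemma ratio_bound S J K C C' D D' :
  0 <= C -> 0 <= D -> 1 <= K -> K <= J -> J + 1 <= S -> J + 1 <= 2 * K - 1 ->
  (J + 1) * C' = (S - J) * C -> (2 * K - 1 - J) * D = (S - (2 * K - 1 - J) + 1) * D' ->
  C' * D' <= C * D * (1 - (J - K + 1) / S).
Proof.
  intros HC HD H1 H2 H3 H4 E1 E2.
  set (M := 2 * K - 1 - J) in *. set (P := (J + 1) * (S - M + 1)).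
  assert (HP : 0 < P) by (unfold P, M; apply Rmult_lt_0_compat; lra).
  assert (E : P * (C' * D') = (S - J) * M * (C * D)).
  { unfold P. transitivity (((J + 1) * C') * ((S - M + 1) * D')); [ring|].
    rewrite E1, <- E2. ring. }
  pose proof (ratio_polynomial S J K H1 H2 H3 H4) as HR. fold M P in HR.
  apply Rmult_le_reg_l with (P * S); [apply Rmult_lt_0_compat; lra|].
  replace (P * S * (C' * D')) with (S * (P * (C' * D'))) by ring. rewrite E.
  replace (P * S * (C * D * (1 - (J - K + 1) / S))) with (C * D * ((S - (J - K + 1)) * P))
    by (field; lra).
  replace (S * ((S - J) * M * (C * D))) with (C * D * ((S - J) * M * S)) by ring.
  apply Rmult_le_compat_l; [apply Rmult_le_pos|]; lra.
Qed.

Definition pair_binom (s k j : nat) : nat := (binom s j * binom s (2 * k - 1 - j))%nat.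

Lemma exp_le x y : x <= y -> exp x <= exp y.
Proof. intros [H|H]; [left; apply exp_increasing; auto|right; subst; auto]. Qed.

Lemma pair_binom_step s k j : (1 <= s)%nat -> (k <= j)%nat -> (j + 1 <= 2 * k - 1)%nat ->
  INR (pair_binom s k (j + 1)) <= INR (pair_binom s k j) * exp (- INR (j - k + 1) / INR s).
Proof.
  intros Hs Hkj Hj. unfold pair_binom.
  destruct (le_lt_dec (j + 1) s) as [Hjs|Hjs].
  2: { rewrite (binom_gt s (j + 1)), Nat.mul_0_l by lia. simpl INR.
       apply Rmult_le_pos; [apply pos_INR | left; apply exp_pos]. }
  set (m := (2 * k - 1 - j)%nat).
  replace (2 * k - 1 - (j + 1))%nat with (m - 1)%nat by (unfold m; lia).
  pose proof (binom_succ s j) as E1. pose proof (binom_succ s (m - 1)) as E2.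
  replace (m - 1 + 1)%nat with m in E2 by (unfold m; lia).
  apply (f_equal INR) in E1, E2. rewrite !mult_INR, !minus_INR in E1, E2 by (unfold m; lia).
  rewrite plus_INR in E1.
  assert (Hm : INR m = 2 * INR k - 1 - INR j) by (unfold m; rewrite !minus_INR, mult_INR by lia; simpl; lra).
  assert (Hk : 1 <= INR k) by (apply (le_INR 1); lia).
  assert (Hkj' : INR k <= INR j) by (apply le_INR; lia).
  assert (Hjs' : INR j + 1 <= INR s) by (rewrite <- S_INR; apply le_INR; lia).
  assert (Hj' : INR j + 1 <= 2 * INR k - 1).
  { assert (INR (j + 1) <= INR (2 * k - 1)) by (apply le_INR; lia).
    rewrite plus_INR, minus_INR, mult_INR in H by lia. simpl in H. lra. }
  rewrite !mult_INR. eapply Rle_trans.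
  - change (INR 1) with 1 in E1. rewrite minus_INR, Hm in E2 by (unfold m; lia).
    change (INR 1) with 1 in E2.
    apply (ratio_bound (INR s) (INR j) (INR k) (INR (binom s j)) _ (INR (binom s m)));
      try apply pos_INR; auto; lra.
  - apply Rmult_le_compat_l; [apply Rmult_le_pos; apply pos_INR|].
    replace (INR (j - k + 1)) with (INR j - INR k + 1) by (rewrite plus_INR, minus_INR by lia; simpl; ring).
    pose proof (exp_ineq1_le (- ((INR j - INR k + 1) / INR s))).
    replace (- (INR j - INR k + 1) / INR s) with (- ((INR j - INR k + 1) / INR s)) by (field; lra).
    lra.
Qed.

Lemma pair_binom_decay s k n : (1 <= s)%nat -> (1 <= k)%nat -> (n <= k - 1)%nat ->
  INR (pair_binom s k (k + n)) <= INR (pair_binom s k k) * exp (- INR n * (INR n + 1) / (2 * INR s)).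
Proof.
  intros Hs Hk. induction n as [|n IH]; intros Hn.
  - rewrite Nat.add_0_r. simpl INR.
    replace (- 0 * (0 + 1) / (2 * INR s)) with 0 by (field; apply not_0_INR; lia).
    rewrite exp_0. lra.
  - replace (k + S n)%nat with (k + n + 1)%nat by lia.
    eapply Rle_trans; [apply pair_binom_step; lia|].
    replace (k + n - k + 1)%nat with (S n) by lia.
    eapply Rle_trans; [apply Rmult_le_compat_r; [left; apply exp_pos | apply IH; lia]|].
    rewrite Rmult_assoc, <- exp_plus. apply Rmult_le_compat_l; [apply pos_INR|].
    apply exp_le. rewrite S_INR. right. field. apply not_0_INR. lia.
Qed.

End BinomialDecay.

Section TailBound.
Local Open Scope R_scope.

Definition gauss_weight (s H : nat) : R := exp (- (INR H - 1) * INR H / (2 * INR s)).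

Lemma gauss_weight_0 s : gauss_weight s 0 = 1.
Proof. unfold gauss_weight. simpl INR. rewrite Rmult_0_r, Rdiv_0_l. apply exp_0. Qed.

(* Pairs with p + q = 2k - 1 ones, k - 1 <= q and k <= q + H, whose walk reaches level H are
   at most C(s,k) C(s,k-1) exp(-(H-1)H/2s): reflect, then use the Gaussian decay. *)
Lemma high_pairs_bound s k p q H : (1 <= s)%nat -> (1 <= k)%nat ->
  (p + q = 2 * k - 1)%nat -> (k - 1 <= q)%nat -> (k <= q + H)%nat ->
  INR (length (high_pairs s p q H)) <= INR (pair_binom s k k) * gauss_weight s H.
Proof.
  intros Hs Hk Hpq Hq HqH.
  assert (HE : 0 <= INR (pair_binom s k k) * gauss_weight s H)
    by (apply Rmult_le_pos; [apply pos_INR | left; apply exp_pos]).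
  destruct (le_lt_dec H p) as [Hp|Hp]; [|rewrite high_pairs_nil by lia; exact HE].
  set (n := (q + H - k)%nat).
  eapply Rle_trans; [apply le_INR, reflection_count|].
  replace (binom s (q + H) * binom s (p - H))%nat with (pair_binom s k (k + n))
    by (unfold pair_binom, n; f_equal; f_equal; lia).
  eapply Rle_trans; [apply pair_binom_decay; unfold n; lia|].
  apply Rmult_le_compat_l; [apply pos_INR|]. unfold gauss_weight. apply exp_le.
  assert (HS : 0 < INR s) by (apply lt_0_INR; lia).
  assert (Hn : INR H - 1 <= INR n).
  { unfold n. rewrite minus_INR, plus_INR by lia. pose proof (le_INR (k - 1) q Hq) as Hq'.
    rewrite minus_INR in Hq' by lia. simpl in Hq'. lra. }
  pose proof (pos_INR n). pose proof (pos_INR H).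
  unfold Rdiv. apply Rmult_le_compat_r; [left; apply Rinv_0_lt_compat; lra|]. nra.
Qed.

Lemma X_0 s : (1 <= s)%nat -> X s 0 = [].
Proof.
  intros Hs. destruct (X s 0) as [|p l] eqn:E; auto.
  assert (Hp : In p (X s 0)) by (rewrite E; left; auto).
  destruct (X_encode s 0 p Hs Hp). lia.
Qed.

Lemma tail_bound s k m H : (1 <= s)%nat -> (H = 0 \/ 4 * H + 2 <= m)%nat ->
  INR (length (filter (fun p => (Z.of_nat m <=? max_height p)%Z) (X s k))) <=
  2 * INR (length (X s k)) * gauss_weight s H.
Proof.
  intros Hs HH.
  set (T := length (filter _ (X s k))).
  assert (HTX : (T <= length (X s k))%nat) by apply filter_length_le.
  assert (HS : 1 <= INR s) by (apply (le_INR 1); lia).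
  pose proof (exp_pos (- (INR H - 1) * INR H / (2 * INR s))) as HE. fold (gauss_weight s H) in HE.
  destruct (Nat.eq_dec H 0) as [->|H0].
  { rewrite gauss_weight_0. apply le_INR in HTX. pose proof (pos_INR (length (X s k))). lra. }
  destruct HH as [HH|HH]; [lia|].
  destruct (Nat.eq_dec k 0) as [->|K0].
  { unfold T. rewrite X_0 by auto. simpl. lra. }
  pose proof (tail_count s k m H Hs HH) as TC. fold T in TC.
  pose proof (X_lower s k Hs ltac:(lia)) as XL.
  pose proof (high_pairs_bound s k k (k - 1) H Hs ltac:(lia) ltac:(lia) ltac:(lia) ltac:(lia)) as C1.
  pose proof (high_pairs_bound s k (k - 1) k H Hs ltac:(lia) ltac:(lia) ltac:(lia) ltac:(lia)) as C2.
  apply le_INR in TC, XL. rewrite plus_INR, !mult_INR in TC. rewrite !mult_INR in XL.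
  replace (INR (binom s k) * INR (binom s (k - 1))) with (INR (pair_binom s k k)) in XL
    by (unfold pair_binom; rewrite mult_INR; do 3 f_equal; lia).
  apply Rmult_le_reg_r with (INR s); [lra|].
  assert (INR (pair_binom s k k) * gauss_weight s H <= INR (length (X s k)) * INR s * gauss_weight s H)
    by (apply Rmult_le_compat_r; lra).
  lra.
Qed.

End TailBound.

Section Summation.
Local Open Scope R_scope.

Definition sum_over {A} (f : A -> R) (L : list A) : R := fold_right (fun x acc => f x + acc) 0 L.

Lemma sum_over_ext {A} (f g : A -> R) L : (forall x, f x = g x) -> sum_over f L = sum_over g L.
Proof. intros H. induction L; simpl; auto. rewrite H, IHL. reflexivity. Qed.

Lemma telescope_levels (e : nat -> R) M N :
  sum_f_R0 (fun i => if (S i <=? M)%nat then e (S i) - e i else 0) N = e (Nat.min M (S N)) - e 0%nat.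
Proof.
  induction N as [|N IH].
  - destruct M as [|[|M]]; simpl; ring.
  - rewrite tech5, IH. destruct (Nat.leb_spec (S (S N)) M).
    + rewrite !Nat.min_r by lia. ring.
    + rewrite (Nat.min_l M (S (S N))) by lia.
      destruct (Nat.le_gt_cases M (S N)); [rewrite Nat.min_l by lia; ring|].
      replace M with (S (S N)) in * by lia. lia.
Qed.

Lemma layer_cake {A} (e : nat -> R) (g : A -> nat) N L : (forall x, In x L -> (g x <= S N)%nat) ->
  sum_over (fun x => e (g x)) L =
  e 0%nat * INR (length L) +
  sum_f_R0 (fun i => (e (S i) - e i) * INR (length (filter (fun x => S i <=? g x)%nat L))) N.
Proof.
  induction L as [|x L IH]; intros HL.
  - change (sum_over _ []) with 0. rewrite (sum_eq _ (fun _ => 0)); [rewrite sum_cte; simpl; ring|].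
    intros i _. simpl. ring.
  - change (sum_over ?f (x :: L)) with (f x + sum_over f L).
    rewrite IH by (intros; apply HL; right; auto).
    assert (Hsplit : forall i,
      (e (S i) - e i) * INR (length (filter (fun x => S i <=? g x)%nat (x :: L))) =
      (if (S i <=? g x)%nat then e (S i) - e i else 0) +
      (e (S i) - e i) * INR (length (filter (fun x => S i <=? g x)%nat L))).
    { intros i. cbn [filter]. destruct (S i <=? g x)%nat; cbn [length]; rewrite ?S_INR; ring. }
    rewrite (sum_eq _ _ N (fun i _ => Hsplit i)), plus_sum, telescope_levels,
      Nat.min_l by (apply HL; left; auto).
    change (length (x :: L)) with (S (length L)). rewrite S_INR. ring.
Qed.

Lemma geometric_bound y N : 0 < y -> sum_f_R0 (fun i => exp (- INR (S i) * y)) N <= 1 / y.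
Proof.
  intros Hy.
  assert (Einv : exp (- y) * exp y = 1) by (rewrite <- exp_plus, Rplus_opp_l; apply exp_0).
  assert (Estep : forall n, exp (- INR (S n) * y) = exp (- INR n * y) * exp (- y)).
  { intros n. rewrite <- exp_plus, S_INR. f_equal. ring. }
  assert (Eq : forall n, sum_f_R0 (fun i => exp (- INR (S i) * y)) n * (exp y - 1) =
                         1 - exp (- INR (S n) * y)).
  { intros n. induction n as [|n IH].
    - cbn [sum_f_R0]. rewrite Estep. simpl INR. rewrite Ropp_0, Rmult_0_l, exp_0.
      rewrite Rmult_1_l, Rmult_minus_distr_l, Einv. ring.
    - rewrite tech5, Rmult_plus_distr_r, IH, (Estep (S n)).
      rewrite Rmult_assoc, Rmult_minus_distr_l, Einv. ring. }
  set (S := sum_f_R0 _ N). pose proof (Eq N) as EN. fold S in EN.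
  pose proof (exp_ineq1_le y). pose proof (exp_pos (- INR (Datatypes.S N) * y)).
  assert (0 <= S) by (apply cond_pos_sum; intros; left; apply exp_pos).
  apply Rmult_le_reg_r with y; auto. unfold Rdiv. rewrite Rmult_assoc, Rinv_l by lra. nra.
Qed.

End Summation.

Section Moment.
Local Open Scope R_scope.

(* The constant of the final bound: the maximum over u of (a + 23/16) u - u^2/32 + 1/8. *)
Definition gauss_const (a : R) : R := 8 * ((a + 23 / 16) * (a + 23 / 16)) + 1 / 8.

Lemma level_quadratic m H : 0 <= m -> 0 <= H -> m - 5 <= 4 * H ->
  m * m / 16 - 7 * m / 8 - 1 / 4 <= (H - 1) * H.
Proof.
  intros Hm HH Hr.
  replace ((H - 1) * H) with ((H - 1 / 2) * (H - 1 / 2) - 1 / 4) by field.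
  destruct (Rle_or_lt 7 m).
  - assert ((m / 4 - 7 / 4) * (m / 4 - 7 / 4) <= (H - 1 / 2) * (H - 1 / 2))
      by (apply Rmult_le_compat; lra).
    lra.
  - assert (0 <= m * (14 - m)) by (apply Rmult_le_pos; lra).
    assert (0 <= (H - 1 / 2) * (H - 1 / 2)) by apply Rle_0_sqr.
    lra.
Qed.

(* The Gaussian weight of level H beats the exponential growth a m / sq, up to
   the constant and a factor exp(-m/sq) that remains summable. *)
Lemma gaussian_exponent a sq m H : 0 < a -> 1 <= sq -> 0 <= m -> 0 <= H -> m - 5 <= 4 * H ->
  a * m / sq - (H - 1) * H / (2 * (sq * sq)) <= gauss_const a - m / sq.
Proof.
  intros Ha Hsq Hm HH Hr.
  set (u := m / sq).
  assert (Hu : 0 <= u) by (unfold u; apply Rmult_le_pos; [lra | left; apply Rinv_0_lt_compat; lra]).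
  assert (Emu : m = u * sq) by (unfold u; field; lra).
  pose proof (level_quadratic m H Hm HH Hr) as HQ.
  assert (F : u * u / 32 - 7 * u / 16 - 1 / 8 <= (H - 1) * H / (2 * (sq * sq))).
  { apply Rmult_le_reg_r with (2 * (sq * sq)); [nra|].
    unfold Rdiv at 4. rewrite Rmult_assoc, Rinv_l, Rmult_1_r by nra.
    rewrite Emu in HQ. nra. }
  replace (a * m / sq) with (a * u) by (unfold u; field; lra).
  unfold gauss_const.
  assert (0 <= (u - 16 * (a + 23 / 16)) * (u - 16 * (a + 23 / 16))) by apply Rle_0_sqr.
  fold u. nra.
Qed.

(* Increments of exp: exp x - exp (x - d) <= d exp x, as 1 - exp(-d) <= d. *)
Lemma exp_increment_le x d : 0 <= d -> exp x - exp (x - d) <= d * exp x.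
Proof.
  intros Hd. unfold Rminus at 2. rewrite exp_plus.
  pose proof (exp_ineq1_le (- d)). pose proof (exp_pos x). nra.
Qed.

Lemma level_term_bound a sq m H : 0 < a -> 1 <= sq -> 0 <= m -> 0 <= H -> m - 5 <= 4 * H ->
  (exp (a * m / sq) - exp (a * (m - 1) / sq)) * exp (- (H - 1) * H / (2 * (sq * sq)))
  <= (a / sq) * exp (gauss_const a) * exp (- m * (1 / sq)).
Proof.
  intros Ha Hsq Hm HH Hr.
  assert (Had : 0 <= a / sq) by (left; apply Rdiv_lt_0_compat; lra).
  replace (a * (m - 1) / sq) with (a * m / sq - a / sq) by (field; lra).
  eapply Rle_trans.
  { apply Rmult_le_compat_r; [left; apply exp_pos|]. apply exp_increment_le, Had. }
  rewrite Rmult_assoc, Rmult_assoc, <- !exp_plus. apply Rmult_le_compat_l; auto.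
  apply exp_le. pose proof (gaussian_exponent a sq m H Ha Hsq Hm HH Hr).
  replace (- m * (1 / sq)) with (- (m / sq)) by (field; lra).
  replace (- (H - 1) * H / (2 * (sq * sq))) with (- ((H - 1) * H / (2 * (sq * sq)))) by (field; lra).
  lra.
Qed.

Definition level (m : nat) : nat := ((m - 2) / 4)%nat.

Lemma level_spec m : (level m = 0 \/ 4 * level m + 2 <= m)%nat /\ (m <= 4 * level m + 5)%nat.
Proof.
  unfold level. pose proof (Nat.div_mod_eq (m - 2) 4).
  pose proof (Nat.mod_upper_bound (m - 2) 4 ltac:(lia)). lia.
Qed.

Lemma heights_from_range l h :
  (0 <= fold_right Z.max 0 (heights_from h l) <= Z.max 0 (Z.abs h + Z.of_nat (length l)))%Z.
Proof.
  revert h; induction l as [|b l IH]; intros h; simpl; [lia|].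
  specialize (IH (if b then h + 1 else h - 1)%Z). destruct b; lia.
Qed.

Lemma max_height_range p : (0 <= max_height p <= Z.of_nat (length p))%Z.
Proof. pose proof (heights_from_range p 0). unfold max_height. lia. Qed.

Lemma level_contribution a s k sq i : 0 < a -> (1 <= s)%nat -> 1 <= sq -> sq * sq = INR s ->
  (exp (a * INR (S i) / sq) - exp (a * INR i / sq)) *
    INR (length (filter (fun p => S i <=? Z.to_nat (max_height p))%nat (X s k)))
  <= exp (- INR (S i) * (1 / sq)) * (INR (length (X s k)) * (2 * (a / sq) * exp (gauss_const a))).
Proof.
  intros Ha Hs Hsq Hsq2.
  destruct (level_spec (S i)) as [HH1 HH2]. set (H := level (S i)) in *.
  rewrite (filter_ext _ (fun p => (Z.of_nat (S i) <=? max_height p)%Z)).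
  2: { intros p. pose proof (max_height_range p).
       destruct (Nat.leb_spec (S i) (Z.to_nat (max_height p))), (Z.leb_spec (Z.of_nat (S i)) (max_height p));
         auto; lia. }
  assert (Hinc : exp (a * INR i / sq) <= exp (a * INR (S i) / sq)).
  { apply exp_le. unfold Rdiv. apply Rmult_le_compat_r; [left; apply Rinv_0_lt_compat; lra|].
    apply Rmult_le_compat_l; [lra|]. apply le_INR; lia. }
  eapply Rle_trans.
  { apply Rmult_le_compat_l; [lra|]. apply (tail_bound s k (S i) H Hs HH1). }
  assert (Hlev : INR (S i) - 5 <= 4 * INR H).
  { assert (INR (S i) <= INR (4 * H + 5)) by (apply le_INR; lia).
    rewrite plus_INR, mult_INR in H0. replace (INR 4) with 4 in H0 by (simpl; lra).
    replace (INR 5) with 5 in H0 by (simpl; lra). lra. }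
  pose proof (level_term_bound a sq (INR (S i)) (INR H) Ha Hsq (pos_INR _) (pos_INR _) Hlev) as TB.
  rewrite Hsq2 in TB. unfold gauss_weight.
  replace (a * (INR (S i) - 1) / sq) with (a * INR i / sq) in TB by (rewrite S_INR; field; lra).
  pose proof (pos_INR (length (X s k))). nra.
Qed.

Lemma moment_sum_bound a s k : 0 < a -> (1 <= s)%nat ->
  sum_over (fun p => exp (a * IZR (max_height p) / sqrt (INR s))) (X s k) <=
  INR (length (X s k)) * (1 + 2 * a * exp (gauss_const a)).
Proof.
  intros Ha Hs.
  assert (HS : 1 <= INR s) by (apply (le_INR 1); lia).
  set (sq := sqrt (INR s)).
  assert (Hsq : 1 <= sq) by (unfold sq; rewrite <- sqrt_1; apply sqrt_le_1_alt; lra).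
  assert (Hsq2 : sq * sq = INR s) by (apply sqrt_sqrt; lra).
  set (e := fun m : nat => exp (a * INR m / sq)).
  rewrite (sum_over_ext _ (fun p => e (Z.to_nat (max_height p)))).
  2: { intros p. unfold e. rewrite INR_IZR_INZ, Z2Nat.id by apply max_height_range. reflexivity. }
  rewrite (layer_cake e _ (2 * s - 1)).
  2: { intros p Hp. apply in_X in Hp. pose proof (max_height_range p). lia. }
  assert (E0 : e 0%nat = 1) by (unfold e; simpl INR; rewrite Rmult_0_r, Rdiv_0_l; apply exp_0).
  rewrite E0, Rmult_1_l.
  eapply Rle_trans.
  { apply Rplus_le_compat_l, sum_Rle. intros i _. apply level_contribution; auto. }
  rewrite <- scal_sum.
  pose proof (geometric_bound (1 / sq) (2 * s - 1) ltac:(apply Rdiv_lt_0_compat; lra)) as G.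
  replace (1 / (1 / sq)) with sq in G by (field; lra).
  assert (0 <= INR (length (X s k)) * (2 * (a / sq) * exp (gauss_const a))).
  { apply Rmult_le_pos; [apply pos_INR|]. apply Rmult_le_pos; [|left; apply exp_pos].
    left. apply Rmult_lt_0_compat; [lra | apply Rdiv_lt_0_compat; lra]. }
  replace (INR (length (X s k)) * (1 + 2 * a * exp (gauss_const a))) with
    (INR (length (X s k)) + INR (length (X s k)) * (2 * (a / sq) * exp (gauss_const a)) * sq)
    by (field; lra).
  apply Rplus_le_compat_l, Rmult_le_compat_l; auto.
Qed.

Lemma moment_bound a s k : 0 < a -> (1 <= s)%nat ->
  Ek s k (fun p => exp (a * IZR (max_height p) / sqrt (INR s))) <= 1 + 2 * a * exp (gauss_const a).
Proof.
  intros Ha Hs. pose proof (moment_sum_bound a s k Ha Hs) as HB.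
  unfold Ek. fold (sum_over (fun p => exp (a * IZR (max_height p) / sqrt (INR s))) (X s k)).
  assert (0 < 2 * a * exp (gauss_const a)) by (pose proof (exp_pos (gauss_const a)); nra).
  destruct (Nat.eq_dec (length (X s k)) 0) as [L0|L0].
  - rewrite L0. simpl INR. unfold Rdiv. rewrite Rinv_0, Rmult_0_r. lra.
  - assert (0 < INR (length (X s k))) by (apply lt_0_INR; lia).
    apply Rmult_le_reg_r with (INR (length (X s k))); auto.
    unfold Rdiv. rewrite Rmult_assoc, Rinv_l by lra. lra.
Qed.

End Moment.

Open Scope R_scope.

Theorem lemma3p1 (alpha' alpha a : R)
  (Ha' : 0 < alpha') (Hlt : alpha' < alpha) (Ha1 : alpha < 1) (Ha : 0 < a) :
  exists b : R, 0 < b /\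
    forall s k : nat, (1 <= s)%nat ->
      alpha' * INR s <= INR k <= alpha * INR s ->
      Ek s k (fun p => exp (a * IZR (max_height p) / sqrt (INR s))) <= b.
Proof.
  exists (1 + 2 * a * exp (gauss_const a)). split.
  - pose proof (exp_pos (gauss_const a)). nra.
  - intros s k Hs _. apply moment_bound; auto.
Qed.
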